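(* For all integers $d,n\geq 1$, the tangential variety $\tau_{d,n}\subset\mathbb{P}\mathrm{Sym}^d\mathbb{C}^{n+1}$ to the degree-$d$ Veronese embedding of $\mathbb{P}^n$ is strongly concise with respect to the monomial coordinates. Explicitly: for every multi-index $\alpha\in\mathbb{Z}_{\ge0}^{n+1}$ with $|\alpha|=d$ there exist linear forms $L,M$ in $x_0,\dots,x_n$ such that in $L^{d-1}M$ the coefficient of $\mathbf{x}^\alpha$ is zero and the coefficients of all other monomials of degree $d$ are nonzero.
   Context: $\mathbb{P}\mathrm{Sym}^d\mathbb{C}^{n+1}$ is identified with the projective space of degree-$d$ homogeneous polynomials in $x_0,\dots,x_n$, with projective coordinates given by the coefficients of the monomials $\mathbf{x}^\alpha=x_0^{\alpha_0}\cdots x_n^{\alpha_n}$, $|\alpha|=d$. The tangential variety is $\tau_{d,n}=\overline{\{[L^{d-1}M]: L,M \text{ linear forms}\}}$. A variety $X$ in a projective space with coordinate hyperplanes $H_i$ is strongly concise if for every $i$, $(X\cap H_i)\not\subset\bigcup_{j\ne i}H_j$. *)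

From HB Require Import structures.
From mathcomp Require Import all_boot all_order all_algebra.
From mathcomp Require Import complex.
From mathcomp Require Import mpoly.
From mathcomp Require reals.
Import reals.Real.Exports.
Set Implicit Arguments. Unset Strict Implicit. Unset Printing Implicit Defensive.
Import Order.TTheory GRing.Theory Num.Theory.
Local Open Scope ring_scope.

Definition linform (K : nzRingType) (n : nat) (a : 'I_n.+1 -> K) : {mpoly K[n.+1]} :=
  \sum_(i < n.+1) a i *: 'X_i.

(* Take L = x_0 + ... + x_n and M = sum_j b_j x_j. Differentiating L^d shows
   that the coefficient of x^beta in L^(d-1) M is (1/d) c_beta sum_j b_j beta_j,
   where c_beta > 0 is the multinomial coefficient of x^beta in L^d. For
   |beta| = d and b_j = d B^j - w(alpha), with w(beta) = sum_j beta_j B^j the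
   base-B weight and B = d + 1, this is c_beta (w(beta) - w(alpha)); since the
   exponents beta_j are digits in base B, it vanishes exactly at beta = alpha. *)

From HB Require Import structures.
From mathcomp Require Import all_boot all_order all_algebra.
From mathcomp Require Import complex.
From mathcomp Require Import mpoly.
From mathcomp Require reals.
From mathcomp Require Import ring.
Import reals.Real.Exports.
Import Order.TTheory GRing.Theory Num.Theory.
Set Implicit Arguments.
Unset Strict Implicit.
Unset Printing Implicit Defensive.
Local Open Scope ring_scope.

Section Monomials.
Variables (K : comNzRingType) (n : nat).
Implicit Types (p : {mpoly K[n]}) (b : 'X_{1..n}).

Lemma mderiv_exprS p i k : (p ^+ k.+1)^`M(i) = (p^`M(i) * p ^+ k) *+ k.+1.
Proof.
elim: k => [|k IH]; first by rewrite expr1 expr0 mulr1.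
by rewrite exprS mderivM IH !exprS; ring.
Qed.

Lemma mcoeffMXU p j b :
  (p * 'X_j)@_b = if (0 < b j)%N then p@_(b - U_(j)) else 0.
Proof.
case: ifP => hb.
  by rewrite -{1}(submK (m := U_(j)) (m' := b)) ?lep1mP -?lt0n // addmC mcoeffMX.
apply/eqP; rewrite mcoeff_eq0 (perm_mem (msuppMX _ _)).
apply/negP => /mapP [m _ hm].
by move: hb; rewrite hm mnmDE mnm1E eqxx.
Qed.

End Monomials.

Section LinearForms.
Variables (K : comNzRingType) (n : nat).
Implicit Types (a c : 'I_n.+1 -> K) (b : 'X_{1..n.+1}).

Lemma mderiv_linform a j : (linform a)^`M(j) = (a j)%:MP.
Proof.
rewrite /linform raddf_sum (bigD1 j) //= big1 => [|k hk].
  rewrite addr0 mderivZ mderivX mnm1E eqxx -{1}(add0m U_(j)%MM) addmK.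
  by rewrite mpolyX0 scale1r alg_mpolyC.
by rewrite mderivZ mderivX mnm1E (negbTE hk) scale0r scaler0.
Qed.

(* Read off the coefficient of x^(b - U_j) in the derivative of L^(k+1) along x_j. *)
Lemma mcoeff_linform_exprSX a k b j :
  a j * (linform a ^+ k * 'X_j)@_b *+ k.+1 = (linform a ^+ k.+1)@_b *+ b j.
Proof.
rewrite mcoeffMXU; case: ifP => [bj_gt0|]; last first.
  by rewrite lt0n => /negbFE/eqP ->; rewrite mulr0 mul0rn.
have hU : (U_(j) <= b)%MM by rewrite lep1mP -lt0n.
have := mcoeff_deriv j (b - U_(j)) (linform a ^+ k.+1).
rewrite mderiv_exprS mderiv_linform mcoeffMn mcoeffCM submK //.
by rewrite mnmBE mnm1E eqxx subn1 prednK.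
Qed.

Lemma mcoeff_linform1_exprM_linform k c b :
  (linform (fun=> 1) ^+ k * linform c)@_b *+ k.+1
  = (linform (fun=> 1) ^+ k.+1)@_b * \sum_(j < n.+1) c j * (b j)%:R.
Proof.
rewrite {2}/linform mulr_sumr raddf_sum /= mulr_sumr -sumrMnl.
apply: eq_bigr => j _.
have := mcoeff_linform_exprSX (fun=> 1) k b j.
rewrite -scalerAr mcoeffZ mul1r -mulrnAr => ->.
by rewrite mulrCA mulr_natr.
Qed.

Lemma mcoeff_linform1_exprS k b :
  (linform (fun=> 1 : K) ^+ k.+1)@_b
  = \sum_(j < n.+1) if (0 < b j)%N then (linform (fun=> 1) ^+ k)@_(b - U_(j)) else 0.
Proof.
rewrite exprSr {2}/linform mulr_sumr raddf_sum; apply: eq_bigr => j _.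
by rewrite scale1r -mcoeffMXU.
Qed.

End LinearForms.

Section Positivity.
Variables (R : numDomainType) (n : nat).
Implicit Types (b : 'X_{1..n.+1}).

Lemma mcoeff_linform1_expr_ge0 k b : 0 <= (linform (fun=> 1 : R) ^+ k)@_b.
Proof.
elim: k b => [|k IH] b; first by rewrite expr0 mcoeff1 ler0n.
by rewrite mcoeff_linform1_exprS sumr_ge0 // => j _; case: ifP.
Qed.

Lemma mcoeff_linform1_expr_gt0 k b :
  mdeg b = k -> 0 < (linform (fun=> 1 : R) ^+ k)@_b.
Proof.
elim: k b => [|k IH] b hb.
  by move/eqP: hb; rewrite mdeg_eq0 expr0 mcoeff1 => ->; rewrite ltr01.
have [j bj_gt0] : exists j, (0 < b j)%N.
  apply/existsP; rewrite -[[exists _, _]]negbK negb_exists; apply/forallP => b0.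
  by move: hb; rewrite mdegE big1 // => j _; apply/eqP; rewrite -leqn0 leqNgt b0.
have hU : (U_(j) <= b)%MM by rewrite lep1mP -lt0n.
rewrite mcoeff_linform1_exprS (bigD1 j) //= bj_gt0 ltr_pwDl //.
  by apply: IH; apply/eqP; rewrite -(eqn_add2r 1) -(mdeg1 j) -mdegD submK // hb mdeg1 addn1.
by apply: sumr_ge0 => i _; case: ifP => // _; apply: mcoeff_linform1_expr_ge0.
Qed.

End Positivity.

Lemma base_expansion_inj (B m : nat) (f g : 'I_m -> nat) :
  (forall i, f i < B)%N -> (forall i, g i < B)%N ->
  (\sum_(i < m) f i * B ^ i = \sum_(i < m) g i * B ^ i)%N -> f =1 g.
Proof.
elim: m f g => [|m IH] f g f_lt g_lt; first by move=> _ [].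
have shift (h : 'I_m.+1 -> nat) : (\sum_(i < m.+1) h i * B ^ i
    = h ord0 + B * \sum_(i < m) h (lift ord0 i) * B ^ i)%N.
  by rewrite big_ord_recl expn0 muln1 big_distrr; congr (_ + _);
    apply: eq_bigr => i _; rewrite /bump /= expnS mulnCA.
rewrite !shift => eq_sum.
have eq0 : f ord0 = g ord0.
  have := congr1 (modn^~ B) eq_sum.
  by rewrite ![(_ + B * _)%N]addnC ![(B * _)%N]mulnC !modnMDl !modn_small.
have B_gt0 : (0 < B)%N by apply: leq_ltn_trans (f_lt ord0).
move: eq_sum; rewrite eq0 => /addnI /eqP; rewrite eqn_pmul2l // => /eqP eq_rest.
move=> i; case: (unliftP ord0 i) => [j ->|->] //.
exact: IH (fun i => f_lt _) (fun i => g_lt _) eq_rest j.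
Qed.

Lemma mnm_le_mdeg n (m : 'X_{1..n}) i : (m i <= mdeg m)%N.
Proof. by rewrite mdegE (bigD1 i) //= leq_addr. Qed.

Definition mweight {n} (B : nat) (m : 'X_{1..n}) : nat := \sum_(i < n) m i * B ^ i.

Lemma mweight_inj n d (m m' : 'X_{1..n}) :
  mdeg m = d -> mdeg m' = d -> mweight d.+1 m = mweight d.+1 m' -> m = m'.
Proof.
move=> hm hm' eq_w; apply/mnmP; apply: (@base_expansion_inj _ _ m m' _ _ eq_w) => i.
  by rewrite ltnS -hm mnm_le_mdeg.
by rewrite ltnS -hm' mnm_le_mdeg.
Qed.

Theorem mainTheorem8 (R : realType) (d n : nat) (hd : (1 <= d)%N) (hn : (1 <= n)%N)
  (alpha : 'X_{1..n.+1}) (halpha : mdeg alpha = d) :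
  exists (a b : 'I_n.+1 -> R[i]),
    let F := linform a ^+ d.-1 * linform b in
    F@_alpha = 0 /\
    (forall beta : 'X_{1..n.+1}, mdeg beta = d -> beta != alpha -> F@_beta != 0).
Proof.
case: d hd halpha => // k _ halpha.
pose c : R[i] := (mweight k.+2 alpha)%:R.
exists (fun=> 1), (fun j => (k.+1 * k.+2 ^ j)%:R - c) => F /=.
have coefF beta : mdeg beta = k.+1 -> F@_beta *+ k.+1 =
    (linform (fun=> 1) ^+ k.+1)@_beta * (((mweight k.+2 beta)%:R - c) *+ k.+1).
  move=> hbeta; rewrite mcoeff_linform1_exprM_linform mulrnBl; congr (_ * _).
  have -> : c *+ k.+1 = \sum_j c * (beta j)%:R.
    by rewrite -mulr_sumr -natr_sum -mdegE hbeta mulr_natr.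
  rewrite /mweight natr_sum -sumrMnl -sumrB.
  by apply: eq_bigr => j _; rewrite -mulr_natr !natrM !natrX; ring.
split.
  have := coefF _ halpha; rewrite subrr mul0rn mulr0 => /eqP.
  by rewrite mulrn_eq0 => /eqP.
move=> beta hbeta beta_neq; apply: contra beta_neq => /eqP F0.
have := coefF _ hbeta; rewrite F0 mul0rn => /esym/eqP.
rewrite mulf_eq0 gt_eqF ?mcoeff_linform1_expr_gt0 //= mulrn_eq0 /= subr_eq0 eqr_nat.
by move/eqP/(mweight_inj hbeta halpha)/eqP.
Qed.
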